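(* Let $R$ be a commutative ring with identity and $E$ an $R$-module. The following are equivalent: (1) $E$ is absolutely pure; (2) $E$ is $u$-$\mathfrak p$-absolutely pure for every prime ideal $\mathfrak p$ of $R$; (3) $E$ is $u$-$\mathfrak m$-absolutely pure for every maximal ideal $\mathfrak m$ of $R$.
   Context: For a multiplicative subset $S$ of $R$: a short sequence $0\to A\xrightarrow{f}B\xrightarrow{g}C\to 0$ is $u$-$S$-exact if there is $s\in S$ with $s\,\mathrm{Ker}(f)=0$, $s\,\mathrm{Ker}(g)\subseteq\mathrm{Im}(f)$, $s\,\mathrm{Im}(f)\subseteq\mathrm{Ker}(g)$, $sC\subseteq\mathrm{Im}(g)$; it is $u$-$S$-pure if tensoring with any $R$-module gives a short $u$-$S$-exact sequence; an $R$-module $E$ is $u$-$S$-absolutely pure if every short $u$-$S$-exact sequence $0\to E\to B\to C\to 0$ beginning with $E$ is $u$-$S$-pure. For a prime ideal $\mathfrak p$, $E$ is $u$-$\mathfrak p$-absolutely pure if it is $u$-$(R\setminus\mathfrak p)$-absolutely pure. $E$ is absolutely pure if it is a pure submodule of every module containing it (equivalently $\mathrm{Ext}^1_R(N,E)=0$ for all finitely presented $R$-modules $N$). *)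

From HB Require Import structures.
From mathcomp Require Import all_boot all_order all_algebra.
Set Implicit Arguments. Unset Strict Implicit. Unset Printing Implicit Defensive.
Import GRing.Theory.
Local Open Scope ring_scope.

(* Commutative rings with identity: [comPzRingType] (the zero ring allowed).
   Modules: [lmodType R].  Linear maps: [{linear A -> B}]. *)

Section Defs.
Variable R : comPzRingType.

Definition ideal (I : R -> Prop) : Prop :=
  [/\ I 0, (forall x y, I x -> I y -> I (x + y)) & (forall r x, I x -> I (r * x))].

Definition prime_ideal (P : R -> Prop) : Prop :=
  [/\ ideal P, ~ P 1 & (forall x y, P (x * y) -> P x \/ P y)].

Definition maximal_ideal (M : R -> Prop) : Prop :=
  [/\ ideal M, ~ M 1 &
      (forall J : R -> Prop, ideal J -> (forall x, M x -> J x) ->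
         (forall x, J x <-> M x) \/ J 1)].

Definition multiplicative_subset (S : R -> Prop) : Prop :=
  S 1 /\ (forall s t, S s -> S t -> S (s * t)).

Definition u_S_exact (S : R -> Prop) (A B C : lmodType R)
    (f : A -> B) (g : B -> C) : Prop :=
  exists2 s, S s &
   [/\ (forall a, f a = 0 -> s *: a = 0),
       (forall b, g b = 0 -> exists a, f a = s *: b),
       (forall a, g (s *: f a) = 0)
     & (forall c, exists b, g b = s *: c)].

(** Tensor products, given by their universal property: [beta : A -> N -> T]
    is R-bilinear and every R-bilinear map out of A x N factors uniquely
    through a linear map out of T. *)
Definition bilinear (A N M : lmodType R) (phi : A -> N -> M) : Prop :=
  [/\ (forall a1 a2 n, phi (a1 + a2) n = phi a1 n + phi a2 n),
      (forall r a n, phi (r *: a) n = r *: phi a n),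
      (forall a n1 n2, phi a (n1 + n2) = phi a n1 + phi a n2)
    & (forall r a n, phi a (r *: n) = r *: phi a n)].

Definition is_tensor (A N T : lmodType R) (beta : A -> N -> T) : Prop :=
  bilinear beta /\
  forall (M : lmodType R) (phi : A -> N -> M), bilinear phi ->
    exists h : {linear T -> M},
      (forall a n, h (beta a n) = phi a n) /\
      (forall h' : {linear T -> M}, (forall a n, h' (beta a n) = phi a n) ->
         forall t, h' t = h t).

Definition tensor_map (A B N TA TB : lmodType R) (f : A -> B)
    (betaA : A -> N -> TA) (betaB : B -> N -> TB) (fN : TA -> TB) : Prop :=
  forall a n, fN (betaA a n) = betaB (f a) n.

Definition u_S_pure (S : R -> Prop) (A B C : lmodType R)
    (f : A -> B) (g : B -> C) : Prop :=
  forall (N TA TB TC : lmodType R)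
         (betaA : A -> N -> TA) (betaB : B -> N -> TB) (betaC : C -> N -> TC),
    is_tensor betaA -> is_tensor betaB -> is_tensor betaC ->
    forall (fN : {linear TA -> TB}) (gN : {linear TB -> TC}),
      tensor_map f betaA betaB fN -> tensor_map g betaB betaC gN ->
      u_S_exact S fN gN.

Definition u_S_absolutely_pure (S : R -> Prop) (E : lmodType R) : Prop :=
  forall (B C : lmodType R) (f : {linear E -> B}) (g : {linear B -> C}),
    u_S_exact S f g -> u_S_pure S f g.

Definition u_p_absolutely_pure (p : R -> Prop) (E : lmodType R) : Prop :=
  u_S_absolutely_pure (fun r => ~ p r) E.

Definition pure_mono (E B : lmodType R) (f : E -> B) : Prop :=
  injective f /\
  forall (N TE TB : lmodType R) (betaE : E -> N -> TE) (betaB : B -> N -> TB),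
    is_tensor betaE -> is_tensor betaB ->
    forall fN : {linear TE -> TB}, tensor_map f betaE betaB fN -> injective fN.

(** E is absolutely pure: E is a pure submodule of every module containing it,
    i.e. every R-linear embedding of E into a module is a pure monomorphism. *)
Definition absolutely_pure (E : lmodType R) : Prop :=
  forall (B : lmodType R) (f : {linear E -> B}), injective f -> pure_mono f.

End Defs.

(* (1) -> (2): let 0 -> E -f-> B -g-> C -> 0 be u-S-exact with witness s and
   tensor it with N.  Right exactness of the tensor product gives, with the
   witness s^2, every condition on f (x) N and g (x) N except the one on the
   kernel of f (x) N.  For that one, E embeds by e |-> [e, 0] into the pushout
   Q = (E * B) / {(s e, - f e)}, in which [s e, 0] = [0, f e]; since E is
   absolutely pure this embedding stays injective after tensoring with N, so s
   kills the kernel of f (x) N.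
   (2) -> (3) because maximal ideals are prime.
   (3) -> (1): for an embedding f : E -> B, the sequence 0 -> E -> B -> B/E -> 0
   is exact, so every t in the kernel of f (x) N is killed by some element
   outside each maximal ideal; the annihilator of t is then not contained in
   any maximal ideal, hence t = 0. *)

From HB Require Import structures.
From mathcomp Require Import all_boot all_order all_algebra.
From mathcomp Require Import boolp classical_sets.
(* Imported after mathcomp so that [bilinear] is the one of Defs. *)
From Pilot Require Import Defs.
Set Implicit Arguments. Unset Strict Implicit. Unset Printing Implicit Defensive.
Import GRing.Theory.
Local Open Scope ring_scope.
Local Open Scope quotient_scope.

(* Opposites are the scalings by [-1]. *)
Record premodule (R : comPzRingType) := Premodule {
  pm_sort : choiceType;
  pm_eqv : pm_sort -> pm_sort -> Prop;
  pm_zero : pm_sort;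
  pm_add : pm_sort -> pm_sort -> pm_sort;
  pm_scale : R -> pm_sort -> pm_sort;
  pm_eqv_refl : forall x, pm_eqv x x;
  pm_eqv_sym : forall x y, pm_eqv x y -> pm_eqv y x;
  pm_eqv_trans : forall x y z, pm_eqv x y -> pm_eqv y z -> pm_eqv x z;
  pm_add_eqv : forall x x' y y', pm_eqv x x' -> pm_eqv y y' ->
    pm_eqv (pm_add x y) (pm_add x' y');
  pm_scale_eqv : forall r x x', pm_eqv x x' -> pm_eqv (pm_scale r x) (pm_scale r x');
  pm_addA : forall x y z, pm_eqv (pm_add x (pm_add y z)) (pm_add (pm_add x y) z);
  pm_addC : forall x y, pm_eqv (pm_add x y) (pm_add y x);
  pm_add0 : forall x, pm_eqv (pm_add pm_zero x) x;
  pm_addN : forall x, pm_eqv (pm_add (pm_scale (-1) x) x) pm_zero;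
  pm_scaleA : forall a b x, pm_eqv (pm_scale a (pm_scale b x)) (pm_scale (a * b) x);
  pm_scale1 : forall x, pm_eqv (pm_scale 1 x) x;
  pm_scaleDr : forall a x y,
    pm_eqv (pm_scale a (pm_add x y)) (pm_add (pm_scale a x) (pm_scale a y));
  pm_scaleDl : forall a b x,
    pm_eqv (pm_scale (a + b) x) (pm_add (pm_scale a x) (pm_scale b x)) }.

Section PremoduleQuotient.
Variables (R : comPzRingType) (D : premodule R).
Local Notation T := (pm_sort D).
Local Notation eqv := (@pm_eqv R D).
Local Notation add := (@pm_add R D).
Local Notation scale := (@pm_scale R D).

Definition pm_rel : rel T := fun x y => `[< eqv x y >].

Lemma pm_rel_is_equiv : equiv_class_of pm_rel.
Proof.
split=> [x|x y|y x z]; first exact/asboolP/pm_eqv_refl.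
  by apply/asboolP/asboolP; apply: pm_eqv_sym.
by move=> /asboolP xy /asboolP yz; apply/asboolP; apply: pm_eqv_trans xy yz.
Qed.

Canonical pm_rel_equiv := EquivRelPack pm_rel_is_equiv.
Canonical pm_rel_encModRel := defaultEncModRel pm_rel.

Definition pquot := {eq_quot pm_rel}.
HB.instance Definition _ := Choice.on pquot.

Definition pquot_pi (x : T) : pquot := \pi_pquot x.

Lemma pquot_pi_eq x y : pquot_pi x = pquot_pi y <-> eqv x y.
Proof.
apply: (iff_trans (rwP (@eqquotP _ pm_rel_equiv pquot x y))).
by split=> /asboolP.
Qed.

Lemma pquot_repr_eqv x : eqv (repr (\pi_pquot x)) x.
Proof. by apply/pquot_pi_eq; rewrite /pquot_pi reprK. Qed.

Definition pquot_add := lift_op2 pquot add.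
Definition pquot_scale r := lift_op1 pquot (scale r).
Definition pquot_opp := pquot_scale (-1).

Lemma pi_pquot_add : {morph \pi_pquot : x y / add x y >-> pquot_add x y}.
Proof.
move=> x y; unlock pquot_add; apply/pquot_pi_eq.
by apply: pm_add_eqv; apply: pm_eqv_sym; apply: pquot_repr_eqv.
Qed.

Lemma pi_pquot_scale r : {morph \pi_pquot : x / scale r x >-> pquot_scale r x}.
Proof.
move=> x; rewrite /pquot_scale; unlock; apply/pquot_pi_eq.
by apply: pm_scale_eqv; apply: pm_eqv_sym; apply: pquot_repr_eqv.
Qed.

Lemma pquot_addA : associative pquot_add.
Proof.
elim/quotW=> x; elim/quotW=> y; elim/quotW=> z.
by rewrite -!pi_pquot_add; apply/pquot_pi_eq/pm_addA.
Qed.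

Lemma pquot_addC : commutative pquot_add.
Proof.
by elim/quotW=> x; elim/quotW=> y; rewrite -!pi_pquot_add; apply/pquot_pi_eq/pm_addC.
Qed.

Lemma pquot_add0 : left_id (\pi_pquot (pm_zero D)) pquot_add.
Proof. by elim/quotW=> x; rewrite -pi_pquot_add; apply/pquot_pi_eq/pm_add0. Qed.

Lemma pquot_addN : left_inverse (\pi_pquot (pm_zero D)) pquot_opp pquot_add.
Proof.
by elim/quotW=> x; rewrite /pquot_opp -pi_pquot_scale -pi_pquot_add; apply/pquot_pi_eq/pm_addN.
Qed.

HB.instance Definition _ :=
  GRing.isZmodule.Build pquot pquot_addA pquot_addC pquot_add0 pquot_addN.

Lemma pquot_piD x y : pquot_pi (add x y) = pquot_pi x + pquot_pi y.
Proof. exact: pi_pquot_add. Qed.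

Lemma pquot_scaleA a b v : pquot_scale a (pquot_scale b v) = pquot_scale (a * b) v.
Proof. by elim/quotW: v => x; rewrite -!pi_pquot_scale; apply/pquot_pi_eq/pm_scaleA. Qed.

Lemma pquot_scale1 : left_id 1 pquot_scale.
Proof. by elim/quotW=> x; rewrite -pi_pquot_scale; apply/pquot_pi_eq/pm_scale1. Qed.

Lemma pquot_scaleDr : right_distributive pquot_scale +%R.
Proof.
move=> a; elim/quotW=> x; elim/quotW=> y.
by rewrite -!pquot_piD -!pi_pquot_scale -pquot_piD; apply/pquot_pi_eq/pm_scaleDr.
Qed.

Lemma pquot_scaleDl v : {morph pquot_scale^~ v : a b / a + b}.
Proof.
elim/quotW: v => x a b.
by rewrite -!pi_pquot_scale -pquot_piD; apply/pquot_pi_eq/pm_scaleDl.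
Qed.

HB.instance Definition _ := GRing.Zmodule_isLmodule.Build R pquot
  pquot_scaleA pquot_scale1 pquot_scaleDr pquot_scaleDl.

Lemma pquot_pi0 : pquot_pi (pm_zero D) = 0.
Proof. by []. Qed.

Lemma pquot_piZ r x : pquot_pi (scale r x) = r *: pquot_pi x.
Proof. exact: pi_pquot_scale. Qed.

Lemma pquot_pi_ind (P : pquot -> Prop) : (forall x, P (pquot_pi x)) -> forall q, P q.
Proof. exact: quotW. Qed.

Definition pquot_lift (X : Type) (F : T -> X) (q : pquot) : X := F (repr q).

Lemma pquot_lift_pi (X : Type) (F : T -> X) :
  (forall x y, eqv x y -> F x = F y) -> forall x, pquot_lift F (pquot_pi x) = F x.
Proof. by move=> F_eqv x; apply: F_eqv; apply: pquot_repr_eqv. Qed.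

End PremoduleQuotient.

Section Cokernel.
Variables (R : comPzRingType) (U V : lmodType R) (f : {linear U -> V}).

Definition coker_rel (x y : V) := exists u, f u = x - y.

Lemma coker_rel_eq x y : x = y -> coker_rel x y.
Proof. by move=> ->; exists 0; rewrite linear0 subrr. Qed.

Definition coker_premodule : premodule R.
Proof.
refine (@Premodule R V coker_rel 0 +%R *:%R _ _ _ _ _ _ _ _ _ _ _ _ _).
- by move=> x; apply: coker_rel_eq.
- by move=> x y [u fu]; exists (- u); rewrite linearN fu opprB.
- by move=> x y z [u fu] [v fv]; exists (u + v); rewrite linearD fu fv addrA subrK.
- by move=> x x' y y' [u fu] [v fv]; exists (u + v); rewrite linearD fu fv addrACA opprD.
- by move=> r x x' [u fu]; exists (r *: u); rewrite linearZ /= fu scalerBr.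
- by move=> x y z; apply/coker_rel_eq/addrA.
- by move=> x y; apply/coker_rel_eq/addrC.
- by move=> x; apply/coker_rel_eq/add0r.
- by move=> x; apply/coker_rel_eq; rewrite scaleN1r addNr.
- by move=> a b x; apply/coker_rel_eq/scalerA.
- by move=> x; apply/coker_rel_eq/scale1r.
- by move=> a x y; apply/coker_rel_eq/scalerDr.
- by move=> a b x; apply/coker_rel_eq/scalerDl.
Defined.

Definition coker : lmodType R := pquot coker_premodule.
Definition coker_pi : V -> coker := @pquot_pi R coker_premodule.

Lemma coker_pi_is_linear : linear coker_pi.
Proof. by move=> r x y; rewrite -pquot_piZ -pquot_piD. Qed.

HB.instance Definition _ :=
  GRing.isLinear.Build R V coker *:%R coker_pi coker_pi_is_linear.

Lemma coker_pi_eq0 v : coker_pi v = 0 <-> exists u, f u = v.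
Proof.
rewrite -(linear0 coker_pi) pquot_pi_eq.
by split=> -[u fu]; exists u; rewrite fu subr0.
Qed.

Lemma coker_pi_surj (q : coker) : exists v, coker_pi v = q.
Proof. by elim/pquot_pi_ind: q => v; exists v. Qed.

End Cokernel.

Section TensorConstruction.
Variables (R : comPzRingType) (A N : lmodType R).

Local Notation tword := (seq (R * A * N)).

Definition tword_scale (r : R) (w : tword) : tword :=
  [seq (r * t.1.1, t.1.2, t.2) | t <- w].

Definition tword_eval (M : lmodType R) (phi : A -> N -> M) (w : tword) : M :=
  \sum_(t <- w) t.1.1 *: phi t.1.2 t.2.

Lemma tword_eval_cat (M : lmodType R) (phi : A -> N -> M) w w' :
  tword_eval phi (w ++ w') = tword_eval phi w + tword_eval phi w'.
Proof. exact: big_cat. Qed.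

Lemma tword_eval_scale (M : lmodType R) (phi : A -> N -> M) r w :
  tword_eval phi (tword_scale r w) = r *: tword_eval phi w.
Proof.
rewrite /tword_eval big_map scaler_sumr.
by apply: eq_bigr => t _; rewrite scalerA.
Qed.

(* Words are formal sums of the [c (a (x) n)]; two words are identified when no
   bilinear map can tell them apart. *)
Definition tensor_premodule : premodule R.
Proof.
refine (@Premodule R tword
  (fun w w' => forall (M : lmodType R) (phi : A -> N -> M),
     bilinear phi -> tword_eval phi w = tword_eval phi w')
  [::] cat tword_scale _ _ _ _ _ _ _ _ _ _ _ _ _); cbv beta.
- by [].
- by move=> w w' e M phi bphi; rewrite (e M phi bphi).
- by move=> w1 w2 w3 e12 e23 M phi bphi; rewrite (e12 M phi bphi) (e23 M phi bphi).
- move=> w1 w1' w2 w2' e1 e2 M phi bphi.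
  by rewrite !tword_eval_cat (e1 M phi bphi) (e2 M phi bphi).
- by move=> r w w' e M phi bphi; rewrite !tword_eval_scale (e M phi bphi).
all: move=> *; rewrite ?(tword_eval_cat, tword_eval_scale).
- exact: addrA.
- exact: addrC.
- by rewrite /tword_eval big_nil add0r.
- by rewrite scaleN1r addNr /tword_eval big_nil.
- exact: scalerA.
- exact: scale1r.
- exact: scalerDr.
- exact: scalerDl.
Defined.

Definition tensor : lmodType R := pquot tensor_premodule.

Definition tensor_beta (a : A) (n : N) : tensor :=
  @pquot_pi R tensor_premodule [:: (1, a, n)].

Local Notation tensor_pi := (@pquot_pi R tensor_premodule).

Lemma tensor_piD w w' : tensor_pi (w ++ w') = tensor_pi w + tensor_pi w'.
Proof. exact: pquot_piD. Qed.

Lemma tensor_piZ r w : tensor_pi (tword_scale r w) = r *: tensor_pi w.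
Proof. exact: pquot_piZ. Qed.

Lemma tensor_pi_cons c a n w :
  tensor_pi ((c, a, n) :: w) = c *: tensor_beta a n + tensor_pi w.
Proof. by rewrite -cat1s tensor_piD -tensor_piZ /= mulr1. Qed.

Lemma tensor_beta_bilinear : bilinear tensor_beta.
Proof.
rewrite /tensor_beta; split=> [a1 a2 n|r a n|a n1 n2|r a n];
  rewrite -?tensor_piD -?tensor_piZ; apply/pquot_pi_eq => M phi [b1 b2 b3 b4];
  rewrite /tword_eval !big_cons !big_nil /= ?mulr1 !scale1r !addr0.
- by rewrite b1.
- by rewrite b2.
- by rewrite b3.
- by rewrite b4.
Qed.

Lemma tensor_is_tensor : is_tensor tensor_beta.
Proof.
split=> [|M phi bphi]; first exact: tensor_beta_bilinear.
pose h := @pquot_lift R tensor_premodule M (tword_eval phi).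
have h_pi w : h (tensor_pi w) = tword_eval phi w.
  by apply: pquot_lift_pi => w1 w2; apply.
have h_lin : linear h.
  move=> r; elim/pquot_pi_ind => w1; elim/pquot_pi_ind => w2.
  by rewrite -tensor_piZ -tensor_piD !h_pi tword_eval_cat tword_eval_scale.
exists (HB.pack_for {linear tensor -> M} h (GRing.isLinear.Build R _ _ _ h h_lin)).
split=> [a n|h' h'_beta]; first by rewrite /= h_pi /tword_eval big_cons big_nil scale1r addr0.
elim/pquot_pi_ind => w; rewrite /= h_pi.
elim: w => [|[[c a] n] w IHw]; first by rewrite pquot_pi0 linear0 /tword_eval big_nil.
by rewrite tensor_pi_cons linearP h'_beta IHw /tword_eval big_cons.
Qed.

End TensorConstruction.

Section Bilinear.
Variables (R : comPzRingType) (A N T : lmodType R) (beta : A -> N -> T).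
Hypothesis beta_bilinear : bilinear beta.

Lemma bilinear0l n : beta 0 n = 0.
Proof.
case: beta_bilinear => Dl _ _ _.
by apply: (addIr (beta 0 n)); rewrite -Dl !addr0 add0r.
Qed.

Lemma bilinearBl a a' n : beta (a - a') n = beta a n - beta a' n.
Proof. by case: beta_bilinear => Dl Zl _ _; rewrite -scaleN1r Dl Zl scaleN1r. Qed.

Lemma linear_bilinear_comp (M : lmodType R) (h : {linear T -> M}) :
  bilinear (fun a n => h (beta a n)).
Proof.
case: beta_bilinear => Dl Zl Dr Zr.
by split=> *; rewrite ?Dl ?Zl ?Dr ?Zr ?linearD ?linearZ.
Qed.

Lemma bilinear_linear_comp (A' : lmodType R) (f : {linear A' -> A}) :
  bilinear (fun a n => beta (f a) n).
Proof.
case: beta_bilinear => Dl Zl Dr Zr.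
by split=> *; rewrite ?linearD ?linearZ ?Dl ?Zl ?Dr ?Zr.
Qed.

End Bilinear.

Section TensorUniversalProperty.
Variables (R : comPzRingType) (A N T : lmodType R) (beta : A -> N -> T).
Hypothesis beta_tensor : is_tensor beta.

Lemma tensor_lift (M : lmodType R) (phi : A -> N -> M) : bilinear phi ->
  exists h : {linear T -> M}, forall a n, h (beta a n) = phi a n.
Proof. by case: beta_tensor => _ /(_ M phi) lift /lift [h [h_beta _]]; exists h. Qed.

Lemma tensor_ext (M : lmodType R) (h1 h2 : {linear T -> M}) :
  (forall a n, h1 (beta a n) = h2 (beta a n)) -> h1 =1 h2.
Proof.
case: beta_tensor => beta_bil /(_ M _ (linear_bilinear_comp beta_bil h2)) [h [_ h_uniq]].
by move=> h12 t; rewrite (h_uniq h1 h12) (h_uniq h2 (fun _ _ => erefl)).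
Qed.

Lemma tensor_map_exists (B TB : lmodType R) (betaB : B -> N -> TB) (f : {linear A -> B}) :
  bilinear betaB -> exists fN : {linear T -> TB}, tensor_map f beta betaB fN.
Proof. by move=> betaB_bil; apply: tensor_lift; apply: bilinear_linear_comp. Qed.

End TensorUniversalProperty.

Section TensorRightExactness.
Variables (R : comPzRingType) (A B C N TA TB TC : lmodType R).
Variables (betaA : A -> N -> TA) (betaB : B -> N -> TB) (betaC : C -> N -> TC).
Hypotheses (tensorA : is_tensor betaA) (tensorB : is_tensor betaB)
  (tensorC : is_tensor betaC).
Variables (f : {linear A -> B}) (g : {linear B -> C}).
Variables (fN : {linear TA -> TB}) (gN : {linear TB -> TC}).
Hypotheses (fN_map : tensor_map f betaA betaB fN) (gN_map : tensor_map g betaB betaC gN).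
Variable s : R.

Lemma tensor_map_scale_im_sub_ker :
  (forall a, g (s *: f a) = 0) -> forall t, gN (s *: fN t) = 0.
Proof.
have [[_ ZB _ _] bilC] := (proj1 tensorB, proj1 tensorC).
move=> gsf0 t; apply: (tensor_ext tensorA (h1 := gN \o (s \*: fN)) (h2 := \0)) => a n /=.
by rewrite fN_map -ZB gN_map gsf0 (bilinear0l bilC).
Qed.

Lemma tensor_map_scale_surj :
  (forall c, exists b, g b = s *: c) -> forall t, exists b, gN b = s *: t.
Proof.
have [_ ZC _ _] := proj1 tensorC.
move=> g_surj t; apply/coker_pi_eq0; rewrite linearZ /=.
apply: (tensor_ext tensorC (h1 := s \*: coker_pi gN) (h2 := \0)) => c n /=.
have [b gb] := g_surj c.
by rewrite -linearZ -ZC -gb -gN_map; apply/coker_pi_eq0; exists (betaB b n).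
Qed.

Lemma tensor_map_scale_factor :
  (forall c, exists b, g b = s *: c) ->
  (forall b, g b = 0 -> exists a, f a = s *: b) ->
  exists h : {linear TC -> coker fN}, h \o gN =1 (s * s) \*: coker_pi fN.
Proof.
have bilB := proj1 tensorB; have [DB ZB DBr ZBr] := bilB.
move=> g_surj g_exact.
(* Two lifts of [s c] along [g] differ by an element of [ker g], which [s]
   moves into [im f]; so [s (b (x) n)] is well defined modulo [im fN]. *)
have lift_irrelevant c b b' : g b = s *: c -> g b' = s *: c ->
    forall n, coker_pi fN (s *: betaB b n) = coker_pi fN (s *: betaB b' n).
  move=> gb gb' n; apply/eqP; rewrite -subr_eq0 -linearB -scalerBr -bilinearBl //.
  have [|a fa] := g_exact (b - b'); first by rewrite linearB gb gb' subrr.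
  by apply/eqP/coker_pi_eq0; exists (betaA a n); rewrite fN_map fa -ZB.
have [lift g_lift] := choice g_surj.
pose phi c n := coker_pi fN (s *: betaB (lift c) n).
have phi_bil : bilinear phi.
  split=> [c c' n|r c n|c n n'|r c n]; rewrite /phi.
  - have g_sum : g (lift c + lift c') = s *: (c + c').
      by rewrite linearD !g_lift scalerDr.
    by rewrite (lift_irrelevant _ _ _ (g_lift _) g_sum) DB scalerDr linearD.
  - have g_scale : g (r *: lift c) = s *: (r *: c).
      by rewrite linearZ g_lift /= !scalerA mulrC.
    by rewrite (lift_irrelevant _ _ _ (g_lift _) g_scale) ZB scalerA mulrC -scalerA linearZ.
  - by rewrite DBr scalerDr linearD.
  - by rewrite ZBr scalerA mulrC -scalerA linearZ.
have [h h_beta] := tensor_lift tensorC phi_bil.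
exists h; apply: (tensor_ext tensorB) => b n /=.
have g_scale : g (s *: b) = s *: g b by rewrite linearZ.
by rewrite gN_map h_beta /phi (lift_irrelevant _ _ _ (g_lift _) g_scale) ZB scalerA linearZ.
Qed.

Lemma tensor_map_scale_ker_sub_im :
  (forall c, exists b, g b = s *: c) ->
  (forall b, g b = 0 -> exists a, f a = s *: b) ->
  forall t, gN t = 0 -> exists a, fN a = (s * s) *: t.
Proof.
move=> g_surj g_exact t gNt.
have [h h_gN] := tensor_map_scale_factor g_surj g_exact.
apply/coker_pi_eq0; rewrite linearZ.
by have := h_gN t; rewrite /= gNt linear0 => <-.
Qed.

End TensorRightExactness.

Section Pushout.
Variables (R : comPzRingType) (E B : lmodType R) (f : {linear E -> B}) (s : R).

Lemma pair_add (e e' : E) (b b' : B) : (e, b) + (e', b') = (e + e', b + b').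
Proof. by []. Qed.

Lemma pair_opp (e : E) (b : B) : - (e, b) = (- e, - b).
Proof. by []. Qed.

Lemma pair_scale r (e : E) (b : B) : r *: (e, b) = (r *: e, r *: b).
Proof. by []. Qed.

Definition pushout_rel (e : E) : E * B := (s *: e, - f e).

Lemma pushout_rel_is_linear : linear pushout_rel.
Proof.
move=> r x y; rewrite /pushout_rel pair_scale pair_add.
by rewrite scalerDr !scalerA mulrC linearP opprD scalerN.
Qed.

HB.instance Definition _ :=
  GRing.isLinear.Build R E (E * B)%type *:%R pushout_rel pushout_rel_is_linear.

Definition pushout : lmodType R := coker pushout_rel.

Definition pushout_inl (e : E) : pushout := coker_pi pushout_rel (e, 0).
Definition pushout_inr (b : B) : pushout := coker_pi pushout_rel (0, b).

Lemma pushout_inl_is_linear : linear pushout_inl.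
Proof. by move=> r x y; rewrite /pushout_inl -linearP pair_scale pair_add scaler0 addr0. Qed.

Lemma pushout_inr_is_linear : linear pushout_inr.
Proof. by move=> r x y; rewrite /pushout_inr -linearP pair_scale pair_add scaler0 addr0. Qed.

HB.instance Definition _ :=
  GRing.isLinear.Build R E pushout *:%R pushout_inl pushout_inl_is_linear.
HB.instance Definition _ :=
  GRing.isLinear.Build R B pushout *:%R pushout_inr pushout_inr_is_linear.

Lemma pushout_inl_scale e : pushout_inl (s *: e) = pushout_inr (f e).
Proof.
apply/eqP; rewrite -subr_eq0 /pushout_inl /pushout_inr -linearB; apply/eqP/coker_pi_eq0.
by exists e; rewrite pair_opp pair_add oppr0 addr0 add0r.
Qed.

Lemma pushout_inl_inj : (forall e, f e = 0 -> s *: e = 0) -> injective pushout_inl.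
Proof.
move=> f_ker; apply: raddf_inj => e /coker_pi_eq0 [e' [se' fe']].
by rewrite -se' f_ker // -[f e']opprK fe' oppr0.
Qed.

End Pushout.

Lemma absolutely_pure_tensor_ker (R : comPzRingType) (E B N TE TB : lmodType R)
    (betaE : E -> N -> TE) (betaB : B -> N -> TB) (f : {linear E -> B})
    (fN : {linear TE -> TB}) (s : R) :
  absolutely_pure E -> is_tensor betaE -> is_tensor betaB ->
  tensor_map f betaE betaB fN -> (forall e, f e = 0 -> s *: e = 0) ->
  forall t, fN t = 0 -> s *: t = 0.
Proof.
move=> E_pure tensorE tensorB fN_map f_ker t fNt.
have tensorQ := tensor_is_tensor (pushout f s) N.
have [_ ZQ _ _] := proj1 tensorQ.
have [iN iN_map] := tensor_map_exists tensorE (pushout_inl f s) (proj1 tensorQ).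
have [jN jN_map] := tensor_map_exists tensorB (pushout_inr f s) (proj1 tensorQ).
have iN_inj := (E_pure _ _ (pushout_inl_inj f_ker)).2 _ _ _ _ _ tensorE tensorQ _ iN_map.
have iN_scale : s \*: iN =1 jN \o fN.
  apply: (tensor_ext tensorE) => e n /=.
  by rewrite iN_map fN_map jN_map /= -pushout_inl_scale linearZ ZQ.
apply: iN_inj; rewrite linearZ linear0.
by have := iN_scale t; rewrite /= fNt linear0.
Qed.

Lemma absolutely_pure_u_S_absolutely_pure (R : comPzRingType) (S : R -> Prop)
    (E : lmodType R) :
  multiplicative_subset S -> absolutely_pure E -> u_S_absolutely_pure S E.
Proof.
move=> [_ SM] E_pure B C f g [s Ss [f_ker g_exact fg0 g_surj]].
move=> N TE TB TC betaE betaB betaC tensorE tensorB tensorC fN gN fN_map gN_map.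
exists (s * s); first exact: SM.
split.
- move=> t /(absolutely_pure_tensor_ker E_pure tensorE tensorB fN_map f_ker) st.
  by rewrite -scalerA st scaler0.
- exact: (tensor_map_scale_ker_sub_im tensorB tensorC fN_map gN_map g_surj g_exact).
- have im_sub_ker := tensor_map_scale_im_sub_ker tensorE tensorB tensorC fN_map gN_map fg0.
  by move=> t; rewrite -scalerA -[s *: fN t]linearZ im_sub_ker.
- move=> c; have [b gNb] := tensor_map_scale_surj tensorC gN_map g_surj c.
  by exists (s *: b); rewrite linearZ /= gNb scalerA.
Qed.

Section Ideals.
Variable R : comPzRingType.

Lemma prime_ideal_compl_multiplicative (p : R -> Prop) :
  prime_ideal p -> multiplicative_subset (fun r => ~ p r).
Proof. by case=> _ p1 pM; split=> // s t ps pt /pM []. Qed.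

Lemma maximal_ideal_prime (m : R -> Prop) : maximal_ideal m -> prime_ideal m.
Proof.
case=> m_ideal m1 m_max; split=> // x y mxy.
have [mx|nmx] := pselect (m x); [by left | right].
have [m0 mD mM] := m_ideal.
pose J z := exists a r, m a /\ z = a + r * x.
have J_ideal : ideal J.
  split.
  - by exists 0, 0; rewrite mul0r addr0.
  - move=> _ _ [a [r [ma ->]]] [a' [r' [ma' ->]]].
    by exists (a + a'), (r + r'); rewrite mulrDl addrACA; split=> //; apply: mD.
  - move=> r' _ [a [r [ma ->]]].
    by exists (r' * a), (r' * r); rewrite mulrDr mulrA; split=> //; apply: mM.
have mJ z : m z -> J z by exists z, 0; rewrite mul0r addr0.
have [eqJ|[a [r [ma e1]]]] := m_max J J_ideal mJ.
  by exfalso; apply/nmx/eqJ; exists 0, 1; rewrite mul1r add0r.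
have -> : y = y * a + r * (x * y) by rewrite mulrA [r * x * y]mulrC -mulrDr -e1 mulr1.
by apply: mD; apply: mM.
Qed.

Local Open Scope classical_set_scope.

Lemma ideal_sub_maximal (J : R -> Prop) :
  ideal J -> ~ J 1 -> exists m, maximal_ideal m /\ (forall x, J x -> m x).
Proof.
move=> J_ideal nJ1.
pose P (I : set R) := (exists x, I x) -> [/\ ideal I, J `<=` I & ~ I 1].
have PJ : P J by move=> _; split=> // x.
have [M [PM M_max]] : exists M, P M /\ forall I, M `<` I -> ~ P I.
  apply: Zorn_bigcup => F FP F_total [x [X FX Xx]].
  have F_ideal Y y : F Y -> Y y -> [/\ ideal Y, J `<=` Y & ~ Y 1].
    by move=> FY Yy; apply: FP FY _; exists y.
  have [[X0 _ _] JX _] := F_ideal X x FX Xx.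
  split.
  - split=> [|y z [Y FY Yy] [Z FZ Zz]|r y [Y FY Yy]].
    + by exists X.
    + have [YZ|ZY] := F_total Y Z FY FZ.
        have [[_ ZD _] _ _] := F_ideal Z z FZ Zz.
        by exists Z => //; apply: ZD => //; apply: YZ.
      have [[_ YD _] _ _] := F_ideal Y y FY Yy.
      by exists Y => //; apply: YD => //; apply: ZY.
    + have [[_ _ YM] _ _] := F_ideal Y y FY Yy.
      by exists Y => //; apply: YM.
  - by move=> y /JX Xy; exists X.
  - by move=> [Y FY Y1]; have [_ _] := F_ideal Y 1 FY Y1.
have [M_ideal JM nM1] : [/\ ideal M, J `<=` M & ~ M 1].
  apply: PM; apply: contrapT => M_empty; apply: (M_max J) => //; split.
    by move=> x Mx; exfalso; apply: M_empty; exists x.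
  by move=> JM; apply: M_empty; exists 0; apply: JM; case: J_ideal.
exists M; split=> //; split=> // K K_ideal MK.
have [K1|nK1] := pselect (K 1); [by right | left].
have KM : K `<=` M.
  apply: contrapT => nKM; apply: (M_max K) => //.
  by move=> _; split=> // x /JM /MK.
by move=> x; split=> [/KM | /MK].
Qed.

End Ideals.

Lemma coker_u_S_exact (R : comPzRingType) (S : R -> Prop) (E B : lmodType R)
    (f : {linear E -> B}) :
  S 1 -> injective f -> u_S_exact S f (coker_pi f).
Proof.
move=> S1 f_inj; exists 1 => //; split.
- by move=> e fe0; rewrite scale1r; apply: f_inj; rewrite fe0 linear0.
- by move=> b /coker_pi_eq0 [e fe]; exists e; rewrite scale1r.
- by move=> e; rewrite scale1r; apply/coker_pi_eq0; exists e.
- by move=> c; have [b <-] := coker_pi_surj c; exists b; rewrite scale1r.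
Qed.

Lemma absolutely_pure_of_u_maximal (R : comPzRingType) (E : lmodType R) :
  (forall m : R -> Prop, maximal_ideal m -> u_p_absolutely_pure m E) ->
  absolutely_pure E.
Proof.
move=> E_u_pure B f f_inj; split=> // N TE TB betaE betaB tensorE tensorB fN fN_map.
have tensorC := tensor_is_tensor (coker f) N.
have [gN gN_map] := tensor_map_exists tensorB (coker_pi f) (proj1 tensorC).
apply: raddf_inj => t fNt; apply: contrapT => t_neq0.
have ann_ideal : ideal (fun r : R => r *: t = 0).
  split=> [|x y xt yt|r x xt]; first exact: scale0r.
    by rewrite scalerDl xt yt addr0.
  by rewrite -scalerA xt scaler0.
have [m [m_max ann_m]] : exists m, maximal_ideal m /\ forall r, r *: t = 0 -> m r.
  by apply: ideal_sub_maximal; rewrite // scale1r.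
have [_ m1 _] := m_max.
have [s ms [st _ _ _]] := E_u_pure m m_max B _ f _ (coker_u_S_exact m1 f_inj)
  N TE TB _ betaE betaB _ tensorE tensorB tensorC fN gN fN_map gN_map.
by apply/ms/ann_m/st.
Qed.

Theorem proposition3p4 (R : comPzRingType) (E : lmodType R) :
  (absolutely_pure E <->
     (forall p : R -> Prop, prime_ideal p -> u_p_absolutely_pure p E)) /\
  (absolutely_pure E <->
     (forall m : R -> Prop, maximal_ideal m -> u_p_absolutely_pure m E)).
Proof.
have u_prime (p : R -> Prop) : prime_ideal p -> absolutely_pure E ->
    u_p_absolutely_pure p E.
  by move=> /prime_ideal_compl_multiplicative; apply: absolutely_pure_u_S_absolutely_pure.
split; split.
- by move=> E_pure p /u_prime; apply.
- move=> E_u_prime; apply: absolutely_pure_of_u_maximal => m /maximal_ideal_prime.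
  exact: E_u_prime.
- by move=> E_pure m /maximal_ideal_prime /u_prime; apply.
- exact: absolutely_pure_of_u_maximal.
Qed.
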